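(* Let $E$ be a regular biordered set satisfying: (E1) there exists $0\in E$ with $0\,\omega\,e$ for every $e\in E$; (E2) there is a map $e\mapsto e'$ on $E$ such that for all $e,f\in E$: (i) $(e')'=e$; (ii) $f\,\omega^l\,e$ iff $e'\,\omega^r\,f'$; (iii) $f\,\omega^l\,e'$ iff $M(f,e)=\{0\}$; (E3) for all $e,f\in E$, if $f\,\omega\,e'$ then $S(e',f')\cap S(f',e')\ne\emptyset$. If $e,f\in E$ satisfy $f\,\omega\,e'$, then $S(e',f')\cap S(f',e')$ consists of exactly one element.
   Context: A regular biordered set is a partial algebra isomorphic to the set of idempotents $E(S)$ of a regular semigroup $S$ (regular: every $x$ has $y$ with $xyx=x$), where $ef$ (computed in $S$) is defined when $\{ef,fe\}\cap\{e,f\}\ne\emptyset$. In $E$: $\omega^l=\{(e,f): ef=e\}$, $\omega^r=\{(e,f): fe=e\}$, $\omega=\omega^l\cap\omega^r$; $M(e,f)=\{g\in E: g\,\omega^l\,e,\ g\,\omega^r\,f\}$; for $g,h\in M(e,f)$, $g\preceq h$ iff $eg\,\omega^r\,eh$ and $gf\,\omega^l\,hf$; $S(e,f)=\{h\in M(e,f): g\preceq h\text{ for all }g\in M(e,f)\}$. *)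

(* A regular biordered set is (up to isomorphism) the set E(S) of idempotents
   of a regular semigroup S, with the partial product inherited from S.
   All notions below are invariant under isomorphism of biordered sets, so we
   state everything directly for E(S). *)

Section BiorderedSet.
Variable S : Type.
Variable mul : S -> S -> S.

Definition associative_op : Prop :=
  forall x y z, mul x (mul y z) = mul (mul x y) z.

Definition regular_op : Prop :=
  forall x, exists y, mul (mul x y) x = x.

Definition idem (e : S) : Prop := mul e e = e.

Definition omega_l (e f : S) : Prop := mul e f = e.
Definition omega_r (e f : S) : Prop := mul f e = e.
Definition omega (e f : S) : Prop := omega_l e f /\ omega_r e f.

Definition Mset (e f g : S) : Prop := idem g /\ omega_l g e /\ omega_r g f.

Definition preceq (e f g h : S) : Prop :=
  omega_r (mul e g) (mul e h) /\ omega_l (mul g f) (mul h f).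

Definition Sset (e f h : S) : Prop :=
  Mset e f h /\ forall g, Mset e f g -> preceq e f g h.

End BiorderedSet.

Arguments associative_op {S} mul.
Arguments regular_op {S} mul.
Arguments idem {S} mul e.
Arguments omega_l {S} mul e f.
Arguments omega_r {S} mul e f.
Arguments omega {S} mul e f.
Arguments Mset {S} mul e f g.
Arguments preceq {S} mul e f g h.
Arguments Sset {S} mul e f h.


(* Existence is axiom (E3).  For uniqueness, an element of M(b,a) satisfies
   a h = h = h b, and on such elements the preorder of M(a,b)
   is the natural order ω; two elements of S(a,b) ∩ S(b,a) therefore lie
   ω-below each other, and ω is antisymmetric. *)

Section Sandwich.
Context {S : Type} {mul : S -> S -> S}.

Lemma omega_antisym (g h : S) : omega mul g h -> omega mul h g -> g = h.
Proof.
  intros [gh_g _] [_ gh_h]; unfold omega_l, omega_r in *.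
  now rewrite <- gh_g, gh_h.
Qed.

Lemma preceq_fixed_omega (a b g h : S) :
  mul a g = g -> mul a h = h -> mul g b = g -> mul h b = h ->
  (preceq mul a b g h <-> omega mul g h).
Proof.
  intros ag ah gb hb; unfold preceq, omega, omega_l, omega_r.
  rewrite ag, ah, gb, hb; tauto.
Qed.

Lemma Sset_bisided_unique (a b h k : S) :
  Sset mul a b h -> Sset mul b a h -> Sset mul a b k -> Sset mul b a k -> h = k.
Proof.
  intros [Mh maxh] [[_ [hb ah]] _] [Mk maxk] [[_ [kb ak]] _].
  apply omega_antisym.
  - apply (preceq_fixed_omega a b h k ah ak hb kb), maxk, Mh.
  - apply (preceq_fixed_omega a b k h ak ah kb hb), maxh, Mk.
Qed.

End Sandwich.

Theorem proposition5p2
  (S : Type) (mul : S -> S -> S)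
  (Hassoc : associative_op mul) (Hreg : regular_op mul)
  (zero : S) (prime : S -> S)
  (* (E1) *)
  (E1_idem : idem mul zero)
  (E1 : forall e, idem mul e -> omega mul zero e)
  (* (E2): e |-> e' is a map on E *)
  (E2_map : forall e, idem mul e -> idem mul (prime e))
  (E2i : forall e, idem mul e -> prime (prime e) = e)
  (E2ii : forall e f, idem mul e -> idem mul f ->
            (omega_l mul f e <-> omega_r mul (prime e) (prime f)))
  (E2iii : forall e f, idem mul e -> idem mul f ->
            (omega_l mul f (prime e) <-> (forall g, Mset mul f e g <-> g = zero)))
  (* (E3) *)
  (E3 : forall e f, idem mul e -> idem mul f -> omega mul f (prime e) ->
          exists h, Sset mul (prime e) (prime f) h /\ Sset mul (prime f) (prime e) h)
  (e f : S) (He : idem mul e) (Hf : idem mul f) (Hfe : omega mul f (prime e)) :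
  exists h, (Sset mul (prime e) (prime f) h /\ Sset mul (prime f) (prime e) h) /\
    forall k, Sset mul (prime e) (prime f) k /\ Sset mul (prime f) (prime e) k -> k = h.
Proof.
  destruct (E3 e f He Hf Hfe) as [h [Sh Sh']].
  exists h; split; [now split |].
  intros k [Sk Sk'].
  exact (Sset_bisided_unique _ _ _ _ Sk Sk' Sh Sh').
Qed.
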